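(* Let $d\ge1$ and let $G$ be the graphical 2-sum of two graphs $G_1$ and $G_2$ along an edge $e$. Suppose that $e$ is not a coloop in either $\mathcal{R}_d(G_1)$ or $\mathcal{R}_d(G_2)$. Then $G$ is a $k$-fold $\mathcal{R}_d$-circuit if and only if $G_1$ is a $k_1$-fold $\mathcal{R}_d$-circuit and $G_2$ is a $k_2$-fold $\mathcal{R}_d$-circuit with $k_1+k_2=k+1$.
   Context: For a graph $G=(V,E)$ and a generic $p:V\to\mathbb{R}^d$ (coordinates algebraically independent over $\mathbb{Q}$), the rigidity matrix has a row for each $uv\in E$ with $p(u)-p(v)$ in the $d$ columns of $u$, $p(v)-p(u)$ in those of $v$, zeros elsewhere; $\mathcal{R}_d(G)$ is its row matroid, with rank $r_d$. A coloop is an element in no circuit. For graphs $G_1,G_2$ with $G_1\cap G_2\cong K_2$ and $E(G_1)\cap E(G_2)=\{e\}$, their graphical 2-sum along $e$ is $(G_1\cup G_2)-e$. A set of edges is cyclic if it is a union of $\mathcal{R}_d$-circuits; a graph with edge set $D$ is a $k$-fold $\mathcal{R}_d$-circuit if $D$ is cyclic and $r_d(D)=|D|-k$. *)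

From HB Require Import structures.
From mathcomp Require Import all_boot all_order all_algebra.
From mathcomp Require Import reals.
From mathcomp Require Import mpoly.

Set Implicit Arguments.
Unset Strict Implicit.
Unset Printing Implicit Defensive.

Import Order.TTheory GRing.Theory Num.Theory.
Local Open Scope ring_scope.

(* Graphs are considered on a common finite vertex type [V]; an edge is a
   2-element vertex set [f : {set V}], and a graph is given by its vertex set
   [VS : {set V}] and its edge set [ES : {set {set V}}]. *)

Definition is_graph (V : finType) (VS : {set V}) (ES : {set {set V}}) : Prop :=
  forall f, f \in ES -> #|f| = 2%N /\ f \subset VS.

Section Rigidity.
Variables (R : realType) (V : finType) (d : nat).

Definition realisation := V -> 'rV[R]_d.

Definition coords (p : realisation) (i : 'I_#|{: V * 'I_d}|) : R :=
  let vj := enum_val i in p vj.1 0 vj.2.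

Definition generic (p : realisation) : Prop :=
  forall q : mpoly.mpoly #|{: V * 'I_d}| rat,
    q != 0 -> mpoly.mmap (ratr : rat -> R) (coords p) q != 0.

(* The row of the rigidity matrix for the edge f = uv: the block of vertex u
   is p(u) - p(v), that of v is p(v) - p(u), all other blocks are 0. *)
Definition rigrow (p : realisation) (f : {set V}) : {ffun V -> 'rV[R]_d} :=
  [ffun w => if w \in f then \sum_(x in f :\ w) (p w - p x) else 0].

Definition rank_d (p : realisation) (D : {set {set V}}) : nat :=
  \dim (span [seq rigrow p f | f <- enum D]).

Definition dependent (p : realisation) (D : {set {set V}}) : Prop :=
  (rank_d p D < #|D|)%N.

Definition circuit (p : realisation) (C : {set {set V}}) : Prop :=
  dependent p C /\ forall C' : {set {set V}}, C' \proper C -> ~ dependent p C'.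

Definition coloop (p : realisation) (E : {set {set V}}) (e : {set V}) : Prop :=
  ~ exists C, [/\ circuit p C, C \subset E & e \in C].

Definition cyclic (p : realisation) (D : {set {set V}}) : Prop :=
  forall f, f \in D -> exists C, [/\ circuit p C, C \subset D & f \in C].

Definition kfold_circuit (p : realisation) (D : {set {set V}}) (k : nat) : Prop :=
  cyclic p D /\ (rank_d p D + k)%N = #|D|.

End Rigidity.

(* Write S(D) for the span of the rigidity-matrix rows of an edge set D.  D is
   cyclic iff every row of D lies in the span of the other rows of D, and
   r(D) = dim S(D).  A vector of S(E1) and S(E2) vanishes off the two common
   vertices u, v and is orthogonal to the infinitesimal translations and
   rotations; for p(u) <> p(v) this makes it a multiple of the row of e = uv.
   As e is not a coloop, its row lies in S(E1 - e) and in S(E2 - e), so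
   S(E1 - e) and S(E2 - e) meet exactly in the line of e, which gives
   r(G) + 1 = r(G1) + r(G2), while |E(G)| + 2 = |E1| + |E2|.  The same fact
   moves dependencies between G and the Gi: the G2-part of a dependency of an
   edge of G1 within G is a multiple of the row of e, which is spanned by the
   other edges of G1; conversely, e may be replaced by edges of G2 - e. *)

From HB Require Import structures.
From mathcomp Require Import all_boot all_order all_algebra.
From mathcomp Require Import reals mpoly ring zify.

Set Implicit Arguments.
Unset Strict Implicit.
Unset Printing Implicit Defensive.

Import Order.TTheory GRing.Theory Num.Theory.
Local Open Scope ring_scope.

Section VectorFamily.
Variables (K : fieldType) (vT : vectType K) (T : finType) (row : T -> vT).
Implicit Types (Y Z E : {set T}) (e f g : T).

Definition vspan (Y : {set T}) : {vspace vT} := (\sum_(f in Y) <[row f]>)%VS.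

Definition redundant (Y : {set T}) (f : T) : bool := row f \in vspan (Y :\ f).

Lemma mem_vspan Y f : f \in Y -> row f \in vspan Y.
Proof. by move=> fY; rewrite memvE; apply: (sumv_sup f). Qed.

Lemma vspan_subP Y (W : {vspace vT}) :
  reflect {in Y, forall f, row f \in W} (vspan Y <= W)%VS.
Proof.
apply: (iffP subv_sumP) => sub f fY; first by rewrite memvE sub.
by rewrite -memvE sub.
Qed.

Lemma vspanS Y Z : Y \subset Z -> (vspan Y <= vspan Z)%VS.
Proof. by move=> /subsetP YZ; apply/vspan_subP => f /YZ /mem_vspan. Qed.

Lemma vspanU Y Z : vspan (Y :|: Z) = (vspan Y + vspan Z)%VS.
Proof.
apply: subv_anti; apply/andP; split; last first.
  by rewrite subv_add !vspanS ?subsetUl ?subsetUr.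
apply/vspan_subP => f /setUP [] fYZ.
  by rewrite memvE (subv_trans _ (addvSl _ _)) // -memvE mem_vspan.
by rewrite memvE (subv_trans _ (addvSr _ _)) // -memvE mem_vspan.
Qed.

Lemma vspan_ind (P : vT -> Prop) Y :
  P 0 -> (forall x y, P x -> P y -> P (x + y)) -> (forall c x, P x -> P (c *: x)) ->
  {in Y, forall f, P (row f)} -> forall w, w \in vspan Y -> P w.
Proof.
move=> P0 PD PZ PY w /memv_sumP [ws ws_line ->].
apply: (big_ind P) => // f fY.
by have /vlineP [c ->] := ws_line f fY; apply/PZ/PY.
Qed.

Lemma dim_vspan_le Y : (\dim (vspan Y) <= #|Y|)%N.
Proof.
rewrite /vspan -big_enum -(big_map row predT (fun v => <[v]>%VS)) -span_def.
by rewrite (leq_trans (dim_span _)) // size_map -cardE.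
Qed.

Lemma vspan_setU1_mem g Y : row g \in vspan Y -> vspan (g |: Y) = vspan Y.
Proof.
by move=> gY; rewrite vspanU /vspan big_set1 /=; apply/addv_idPr; rewrite -memvE.
Qed.

Lemma dim_vspan_setU1 g Y :
  row g \notin vspan Y -> \dim (vspan (g |: Y)) = (\dim (vspan Y)).+1.
Proof.
move=> gY; rewrite vspanU /vspan big_set1 -/(vspan Y).
apply/eqP; rewrite eqn_leq; apply/andP; split.
  apply: leq_trans (dimv_add_leqif _ _).1 _.
  by rewrite -add1n leq_add2r dim_vline leq_b1.
by rewrite (ltn_leqif (dimv_leqif_sup (addvSr _ _))) subv_add subvv andbT -memvE.
Qed.

Lemma redundant_vspan f Y : f \in Y -> redundant Y f -> vspan (Y :\ f) = vspan Y.
Proof. by move=> fY red; rewrite -{2}(setD1K fY) vspan_setU1_mem. Qed.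

Lemma redundantS Y Z f : Y \subset Z -> redundant Y f -> redundant Z f.
Proof. by move=> YZ; apply: subvP; apply/vspanS/setSD. Qed.

Lemma full_rank_subset Y Z :
  Y \subset Z -> \dim (vspan Z) = #|Z| -> \dim (vspan Y) = #|Y|.
Proof.
move=> YZ fullZ; apply/eqP; rewrite eqn_leq dim_vspan_le /=.
have : (#|Z| <= \dim (vspan Y) + #|Z :\: Y|)%N.
  rewrite -fullZ -{1}(setID Z Y) (setIidPr YZ) vspanU.
  by rewrite (leq_trans (dimv_add_leqif _ _).1) // leq_add2l dim_vspan_le.
by have := subset_leq_card YZ; rewrite (cardsDS YZ); lia.
Qed.

Lemma full_rank_setU1 g Y : row g \notin vspan Y ->
  \dim (vspan Y) = #|Y| -> \dim (vspan (g |: Y)) = #|g |: Y|.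
Proof.
move=> gY fullY; rewrite dim_vspan_setU1 // fullY cardsU1.
by case: (boolP (g \in Y)) => // /mem_vspan gY'; rewrite gY' in gY.
Qed.

Lemma full_rank_nonredundant Y :
  {in Y, forall g, ~~ redundant Y g} -> \dim (vspan Y) = #|Y|.
Proof.
have [n] := ubnP #|Y|; elim: n Y => // n IH Y ltYn nonred.
have [->|[g gY]] := set_0Vmem Y; first by rewrite /vspan big_set0 dimv0 cards0.
rewrite -(setD1K gY); apply: full_rank_setU1; first exact: nonred.
apply: IH => [|h /setD1P [_ hY]]; first by rewrite (cardsD1 g) gY in ltYn.
by apply: contra (nonred h hY); apply/redundantS/subsetDl.
Qed.

Lemma minimal_spanning_subset (v : vT) Y : v \in vspan Y ->
  exists2 Z : {set T}, Z \subset Y &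
    [/\ v \in vspan Z, \dim (vspan Z) = #|Z| & {in Z, forall g, v \notin vspan (Z :\ g)}].
Proof.
move=> vY; pose P : pred {set T} := fun Z => (Z \subset Y) && (v \in vspan Z).
have PY : P Y by rewrite /P subxx.
have [Z /minsetP [/andP [ZY vZ] minZ] _] := minset_exists PY.
have minZ' : {in Z, forall g, v \notin vspan (Z :\ g)}.
  move=> g gZ; apply/negP => vZg.
  have PZg : P (Z :\ g) by rewrite /P vZg (subset_trans (subsetDl _ _)).
  by have /setP/(_ g) := minZ _ PZg (subsetDl _ _); rewrite !inE eqxx gZ.
exists Z => //; split => //; apply: full_rank_nonredundant => g gZ.
by apply: contra (minZ' g gZ) => /(redundant_vspan gZ) ->.
Qed.

Lemma redundant_from_2sum E1 E2 e : e \in E1 ->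
  (vspan E1 :&: vspan E2 <= <[row e]>)%VS -> redundant E1 e ->
  {in (E1 :|: E2) :\ e, forall f, redundant ((E1 :|: E2) :\ e) f} ->
  {in E1, forall f, redundant E1 f}.
Proof.
move=> eE1 capE rede redD f fE1; have [-> //|fe] := eqVneq f e.
have fD : f \in (E1 :|: E2) :\ e by rewrite !inE fe fE1.
have : row f \in (vspan (E1 :\ e :\ f) + vspan (E2 :\ e))%VS.
  rewrite -vspanU; apply: subvP (redD f fD); apply: vspanS.
  by apply/subsetP => g; rewrite !inE => /and3P [-> -> /orP [] ->]; rewrite ?orbT.
case/memv_addP => x xE1 [y yE2 fxy].
have {}xE1 : x \in vspan (E1 :\ f).
  by apply: subvP xE1; apply/vspanS/subsetP => g; rewrite !inE => /and3P [-> _ ->].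
have yE1 : y \in vspan E1.
  have -> : y = row f - x by rewrite fxy addrC addKr.
  by rewrite memvB ?mem_vspan // (subvP (vspanS (subsetDl _ _)) _ xE1).
have ye : y \in <[row e]>%VS.
  by apply: (subvP capE); rewrite memv_cap yE1 (subvP (vspanS (subsetDl _ _)) _ yE2).
rewrite /redundant fxy memvD //.
by apply: subvP ye; rewrite -memvE mem_vspan // !inE eq_sym fe.
Qed.

Lemma redundant_to_2sum E1 E2 e : E1 :&: E2 \subset [set e] ->
  redundant E2 e -> {in E1, forall f, redundant E1 f} ->
  {in E1 :\ e, forall f, redundant ((E1 :|: E2) :\ e) f}.
Proof.
move=> E12 rede redE1 f /setD1P [fe fE1]; have fE2 : f \notin E2.
  by apply: contra fe => fE2; rewrite -in_set1 (subsetP E12) // inE fE1.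
apply: subvP (redE1 f fE1); apply/vspan_subP => g /setD1P [gf gE1].
have [->|ge] := eqVneq g e; last by rewrite mem_vspan // !inE gf ge gE1.
apply: subvP rede; apply/vspanS/subsetP => h /setD1P [he hE2].
by rewrite !inE he hE2 orbT !andbT; apply: contraTneq hE2 => ->.
Qed.

Section TwoSum.
Variables (E1 E2 : {set T}) (e : T).
Hypotheses (E12 : E1 :&: E2 = [set e])
  (capE : (vspan E1 :&: vspan E2 <= <[row e]>)%VS)
  (rede1 : redundant E1 e) (rede2 : redundant E2 e).

Let eE1 : e \in E1. Proof. by have := set11 e; rewrite -E12 => /setIP []. Qed.
Let eE2 : e \in E2. Proof. by have := set11 e; rewrite -E12 => /setIP []. Qed.

Lemma card_2sum : (#|(E1 :|: E2) :\ e| + 2 = #|E1| + #|E2|)%N.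
Proof.
by rewrite -cardsUI E12 cards1 (cardsD1 e (E1 :|: E2)) inE eE1 addn1 add1n addnC.
Qed.

Lemma dim_2sum : row e != 0 ->
  (\dim (vspan ((E1 :|: E2) :\ e)) + 1 = \dim (vspan E1) + \dim (vspan E2))%N.
Proof.
move=> e_neq0; have capEq : (vspan E1 :&: vspan E2)%VS = <[row e]>%VS.
  by apply/eqP; rewrite eqEsubv capE -memvE memv_cap !mem_vspan.
by rewrite setDUl vspanU !redundant_vspan // -dimv_sum_cap capEq dim_vline e_neq0.
Qed.

Lemma cyclic_2sum :
  {in (E1 :|: E2) :\ e, forall f, redundant ((E1 :|: E2) :\ e) f} <->
  {in E1, forall f, redundant E1 f} /\ {in E2, forall f, redundant E2 f}.
Proof.
have capE' : (vspan E2 :&: vspan E1 <= <[row e]>)%VS by rewrite capvC.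
split=> [redD | [redE1 redE2] f].
  split; first exact: redundant_from_2sum eE1 capE rede1 redD.
  by apply: redundant_from_2sum eE2 capE' rede2 _; rewrite setUC.
move=> /setD1P [fe /setUP [fE1 | fE2]].
  by apply: (redundant_to_2sum _ rede2 redE1); rewrite ?E12 // !inE fe.
rewrite setUC; apply: (redundant_to_2sum _ rede1 redE2); last by rewrite !inE fe.
by rewrite setIC E12.
Qed.

End TwoSum.

End VectorFamily.

Lemma sum_supp2 (T : finType) (M : nmodType) (g : T -> M) a b : a != b ->
  (forall x, x != a -> x != b -> g x = 0) -> \sum_x g x = g a + g b.
Proof.
move=> ab g0; rewrite (bigD1 a) //= (bigD1 b) 1?eq_sym //=.
by rewrite big1 ?addr0 // => x /andP [xb xa]; apply: g0.
Qed.

Section Rigidity.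
Variables (R : realType) (V : finType) (d : nat) (p : realisation R V d).
Implicit Types (X Y C E : {set {set V}}) (W e f : {set V}) (w : {ffun V -> 'rV[R]_d}).
Local Notation S := (vspan (rigrow p)).

Lemma rank_dE Y : rank_d p Y = \dim (S Y).
Proof. by rewrite /rank_d span_def big_map big_enum. Qed.

Lemma circuit_redundant C f : circuit p C -> f \in C -> redundant (rigrow p) C f.
Proof.
move=> [depC minC] fC; have /negP := minC _ (properD1 fC).
move: depC; rewrite /dependent !rank_dE -leqNgt (cardsD1 f C) fC => ltC geCf.
rewrite /redundant; have -> : S (C :\ f) = S C.
  apply/eqP; rewrite eqEdim vspanS ?subsetDl //=.
  by rewrite -ltnS (leq_trans ltC).
exact: mem_vspan.
Qed.

Lemma redundant_circuit Y f : f \in Y -> redundant (rigrow p) Y f ->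
  exists C, [/\ circuit p C, C \subset Y & f \in C].
Proof.
move=> fY /minimal_spanning_subset [Z ZY [fZ fullZ minZ]].
have fNZ : f \notin Z by apply: contra (subsetP ZY f) _; rewrite !inE eqxx.
exists (f |: Z); split; last by rewrite setU11.
- split=> [|C' /properP [C'C [h hC hC']]].
    by rewrite /dependent rank_dE vspan_setU1_mem // fullZ cardsU1 fNZ.
  have C'sub : C' \subset (f |: Z) :\ h by rewrite subsetD1 C'C hC'.
  suff /(full_rank_subset C'sub) : \dim (S ((f |: Z) :\ h)) = #|(f |: Z) :\ h|.
    by rewrite /dependent rank_dE => ->; rewrite ltnn.
  case/setU1P: hC => [->|hZ]; first by rewrite setU1K.
  have -> : (f |: Z) :\ h = f |: (Z :\ h).
    apply/setP => g; rewrite !inE; case: (eqVneq g f) => [->|] //=.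
    by rewrite andbT; apply: contraTneq hZ => <-.
  apply: full_rank_setU1; first exact: minZ.
  exact: full_rank_subset (subsetDl _ _) fullZ.
- by rewrite subUset sub1set fY (subset_trans ZY) ?subsetDl.
Qed.

Lemma cyclicP X : cyclic p X <-> {in X, forall f, redundant (rigrow p) X f}.
Proof.
split=> [cycX f fX | redX f fX]; last exact: redundant_circuit (redX f fX).
by have [C [circC CX fC]] := cycX f fX; apply: redundantS CX (circuit_redundant circC fC).
Qed.

Lemma not_coloop_redundant E e : ~ coloop p E e -> redundant (rigrow p) E e.
Proof.
move=> ncol; apply/idPn => nred; apply: ncol => -[C [circC CE eC]].
by case/negP: nred; apply: redundantS CE (circuit_redundant circC eC).
Qed.

(* The pairing of w with the infinitesimal rotation in the (i, j)-plane. *)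
Definition moment (i j : 'I_d) w : R :=
  \sum_x (w x 0 i * p x 0 j - w x 0 j * p x 0 i).

Lemma momentD i j w w' : moment i j (w + w') = moment i j w + moment i j w'.
Proof.
rewrite /moment -big_split; apply: eq_bigr => x _.
by rewrite !ffunE !mxE /=; ring.
Qed.

Lemma momentZ i j c w : moment i j (c *: w) = c * moment i j w.
Proof.
rewrite /moment mulr_sumr; apply: eq_bigr => x _.
by rewrite !ffunE !mxE /=; ring.
Qed.

Lemma rigrow_edgeE a b x : a != b -> rigrow p [set a; b] x =
  if x == a then p a - p b else if x == b then p b - p a else 0.
Proof.
move=> ab; rewrite ffunE !inE.
case: (eqVneq x a) => [->|xa] /=; first by rewrite setU1K ?big_set1 // inE.
case: (eqVneq x b) => [->|xb] //=.
by rewrite setUC setU1K ?big_set1 // inE eq_sym.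
Qed.

Lemma rigrow_edge_supp a b : a != b ->
  forall x, x != a -> x != b -> rigrow p [set a; b] x = 0.
Proof. by move=> ab x xa xb; rewrite rigrow_edgeE // (negbTE xa) (negbTE xb). Qed.

Lemma rigrow_edge_sum a b : a != b -> \sum_x rigrow p [set a; b] x = 0.
Proof.
move=> ab; rewrite (sum_supp2 ab (rigrow_edge_supp ab)) !rigrow_edgeE //.
by rewrite eqxx eq_sym (negbTE ab) eqxx addrA subrK subrr.
Qed.

Lemma rigrow_edge_moment a b i j : a != b -> moment i j (rigrow p [set a; b]) = 0.
Proof.
move=> ab; rewrite /moment (sum_supp2 ab) => [|x xa xb]; last first.
  by rewrite rigrow_edge_supp // !mxE !mul0r subrr.
by rewrite !rigrow_edgeE // eqxx eq_sym (negbTE ab) eqxx !mxE; ring.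
Qed.

Lemma rspan_supp W E w x : is_graph W E -> w \in S E -> x \notin W -> w x = 0.
Proof.
move=> gE wE xW; move: w wE; apply: (vspan_ind (P := fun w => w x = 0)).
- by rewrite ffunE.
- by move=> y z y0 z0; rewrite ffunE y0 z0 addr0.
- by move=> c y y0; rewrite ffunE y0 scaler0.
move=> f fE; rewrite ffunE; case: ifP => // xf.
by have [_ /subsetP fW] := gE f fE; rewrite fW in xW.
Qed.

Lemma rspan_sum E w :
  {in E, forall f : {set V}, #|f| = 2} -> w \in S E -> \sum_x w x = 0.
Proof.
move=> E2 wE; move: w wE; apply: (vspan_ind (P := fun w => \sum_x w x = 0)).
- by apply: big1 => x _; rewrite ffunE.
- move=> y z y0 z0; under eq_bigr do rewrite ffunE.
  by rewrite big_split /= y0 z0 addr0.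
- move=> c y y0; under eq_bigr do rewrite ffunE.
  by rewrite -scaler_sumr y0 scaler0.
move=> f /E2 /eqP /cards2P [a [b [ab ->]]]; exact: rigrow_edge_sum.
Qed.

Lemma rspan_moment E i j w :
  {in E, forall f : {set V}, #|f| = 2} -> w \in S E -> moment i j w = 0.
Proof.
move=> E2 wE; move: w wE; apply: (vspan_ind (P := fun w => moment i j w = 0)).
- by apply: big1 => x _; rewrite ffunE !mxE !mul0r subrr.
- by move=> y z y0 z0; rewrite momentD y0 z0 addr0.
- by move=> c y y0; rewrite momentZ y0 mulr0.
move=> f /E2 /eqP /cards2P [a [b [ab ->]]]; exact: rigrow_edge_moment.
Qed.

Lemma rigrow_edge_neq0 a b : p a != p b -> rigrow p [set a; b] != 0.
Proof.
move=> pab; have ab : a != b by apply: contra_neq pab => ->.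
apply: contra_neq pab => /(congr1 (fun w => w a)).
by rewrite rigrow_edgeE // eqxx ffunE => /eqP; rewrite subr_eq0 => /eqP.
Qed.

Lemma rspan_capv_edge V1 V2 E1 E2 u v : p u != p v ->
  is_graph V1 E1 -> is_graph V2 E2 -> V1 :&: V2 = [set u; v] ->
  (S E1 :&: S E2 <= <[rigrow p [set u; v]]>)%VS.
Proof.
move=> puv g1 g2 V12; have uv : u != v by apply: contra_neq puv => ->.
have /existsP [i0 pi0] : [exists i, p u 0 i != p v 0 i].
  by apply: contraR puv => /existsPn same; apply/eqP/rowP => i; apply/eqP/negPn/same.
apply/subvP => w /memv_capP [w1 w2].
have w_supp x : x != u -> x != v -> w x = 0.
  move=> xu xv; have : x \notin V1 :&: V2 by rewrite V12 !inE negb_or xu xv.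
  by rewrite inE negb_and => /orP []; [apply: rspan_supp g1 w1 | apply: rspan_supp g2 w2].
have E1_2 : {in E1, forall f : {set V}, #|f| = 2} by move=> f /g1 [].
have wv : w v = - w u.
  by apply/eqP; rewrite -addr_eq0 addrC -(sum_supp2 uv w_supp) (rspan_sum E1_2).
have pi0' : p u 0 i0 - p v 0 i0 != 0 by rewrite subr_eq0.
set c := w u 0 i0 / (p u 0 i0 - p v 0 i0).
have wu j : w u 0 j = c * (p u 0 j - p v 0 j).
  have := rspan_moment i0 j E1_2 w1; rewrite /moment (sum_supp2 uv) => [|x xu xv]; last first.
    by rewrite w_supp // !mxE !mul0r subrr.
  rewrite wv !mxE => moment0.
  have par : w u 0 i0 * (p u 0 j - p v 0 j) = w u 0 j * (p u 0 i0 - p v 0 i0).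
    by apply/eqP; rewrite -subr_eq0; apply/eqP; rewrite -[RHS]moment0; ring.
  by rewrite /c mulrAC par mulfK.
apply/vlineP; exists c; apply/ffunP => x; rewrite ffunE rigrow_edgeE //.
case: (eqVneq x u) => [->|xu]; first by apply/rowP => j; rewrite !mxE wu.
case: (eqVneq x v) => [->|xv]; last by rewrite w_supp // scaler0.
by apply/rowP => j; rewrite wv !mxE wu; ring.
Qed.

Lemma generic_inj : (0 < d)%N -> generic p -> injective p.
Proof.
move=> d_gt0 gen u v puv; apply/eqP; apply: contraT => uv.
pose i := Ordinal d_gt0; pose a := enum_rank (u, i); pose b := enum_rank (v, i).
have ab : a != b by apply: contra uv => /eqP/enum_rank_inj [->].
have Xab : 'X_a - 'X_b != 0 :> {mpoly rat[#|{: V * 'I_d}|]}.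
  apply/eqP => /(congr1 (mcoeff U_(a))); rewrite mcoeffB !mcoeffXU eqxx.
  by rewrite eq_sym (negbTE ab) mcoeff0 subr0 => /eqP; rewrite oner_eq0.
have := gen _ Xab.
by rewrite mmapB !mmapX !mmap1U /coords !enum_rankK /= puv subrr eqxx.
Qed.

End Rigidity.

Theorem lemma3p4 (R : realType) (V : finType) (d : nat) (p : realisation R V d)
    (V1 V2 : {set V}) (E1 E2 : {set {set V}}) (e : {set V}) :
  (1 <= d)%N ->
  generic p ->
  is_graph V1 E1 -> is_graph V2 E2 ->
  (* G1 and G2 intersect in a copy of K2 whose edge is e *)
  #|e| = 2%N -> V1 :&: V2 = e -> E1 :&: E2 = [set e] ->
  ~ coloop p E1 e -> ~ coloop p E2 e ->
  forall k : nat,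
    kfold_circuit p ((E1 :|: E2) :\ e) k <->
    exists k1 k2 : nat,
      [/\ kfold_circuit p E1 k1, kfold_circuit p E2 k2 & (k1 + k2 = k + 1)%N].
Proof.
move=> d_gt0 gen g1 g2 /eqP/cards2P [u [v [uv def_e]]] V12 E12 ncol1 ncol2 k.
have puv : p u != p v by apply: contra_neq uv; apply: generic_inj.
have capE : (vspan (rigrow p) E1 :&: vspan (rigrow p) E2 <= <[rigrow p e]>)%VS.
  by rewrite def_e (rspan_capv_edge puv g1 g2) // V12.
have rede1 := not_coloop_redundant ncol1; have rede2 := not_coloop_redundant ncol2.
have e_neq0 : rigrow p e != 0 by rewrite def_e rigrow_edge_neq0.
have rkD : (rank_d p ((E1 :|: E2) :\ e) + 1 = rank_d p E1 + rank_d p E2)%N.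
  by rewrite !rank_dE; exact: dim_2sum E12 capE rede1 rede2 e_neq0.
have cardD : (#|(E1 :|: E2) :\ e| + 2 = #|E1| + #|E2|)%N := card_2sum E12.
have le1 : (rank_d p E1 <= #|E1|)%N by rewrite rank_dE dim_vspan_le.
have le2 : (rank_d p E2 <= #|E2|)%N by rewrite rank_dE dim_vspan_le.
rewrite /kfold_circuit cyclicP (cyclic_2sum E12 capE rede1 rede2).
split=> [[[/cyclicP cyc1 /cyclicP cyc2] rk] |
         [k1 [k2 [[/cyclicP cyc1 rk1] [/cyclicP cyc2 rk2] sumk]]]].
  exists (#|E1| - rank_d p E1)%N, (#|E2| - rank_d p E2)%N.
  by split; [split | split | ] => //; lia.
by split=> //; lia.
Qed.
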